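(* For $\pi\in S_n$ and $w\in I_n$ let $\mathrm{inv}_w(\pi)=\#\big(\mathrm{Inv}(\pi)\cap\mathrm{Pair}(w)\big)$. Then for all $\sigma,\pi\in S_n$ and $w\in I_n$, $$(-1)^{\mathrm{inv}_w(\sigma\pi)}=(-1)^{\mathrm{inv}_w(\pi)}\cdot(-1)^{\mathrm{inv}_{\pi w\pi^{-1}}(\sigma)}.$$ Consequently the formula $\rho(\pi)C_w=(-1)^{\mathrm{inv}_w(\pi)}C_{\pi w\pi^{-1}}$ ($\pi\in S_n$, $w\in I_n$) defines a representation of $S_n$ on $V_n$, and for each $s\in S$ it agrees with $\rho(s)C_w=\mathrm{sign}(s;w)C_{sws}$.
   Context: $I_n$ is the set of involutions (including the identity) of $S_n$; $V_n$ is the $\mathbb{Q}$-vector space with basis $\{C_w:w\in I_n\}$. $\mathrm{Inv}(\pi)=\{\{i,j\}: (j-i)(\pi(j)-\pi(i))<0\}$. For $w\in I_n$, $\mathrm{Pair}(w)$ is the set of 2-cycles of $w$, regarded as unordered 2-element subsets of $[n]$. $S=\{s_i=(i,i+1):1\le i\le n-1\}$; $\mathrm{sign}(s;w)=-1$ if $sws=w$ and $s\in\mathrm{Des}(w)$, and $1$ otherwise, where $s_i\in\mathrm{Des}(w)$ iff $w(i)>w(i+1)$. *)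

From HB Require Import structures.
From mathcomp Require Import all_boot all_order all_algebra all_fingroup.
Set Implicit Arguments. Unset Strict Implicit. Unset Printing Implicit Defensive.
Import Order.TTheory GRing.Theory Num.Theory.

(* Conventions: [n] = {1..n} is modelled by 'I_n = {0..n-1}.  MathComp composes left-to-right:
   (p * q)%g x = q (p x).  Hence the paper's composite sigma pi (= sigma o pi)
   is (pi * sigma)%g, and pi w pi^{-1} is (pi^-1 * w * pi)%g. *)

Definition is_invol n (w : 'S_n) : bool := (w * w == 1)%g.
Notation invol n := {w : 'S_n | is_invol w}.

Definition Inv n (p : 'S_n) : {set {set 'I_n}} :=
  [set [set ij.1; ij.2] | ij : 'I_n * 'I_n &
     ((((ij.2 : nat)%:Z - (ij.1 : nat)%:Z) *
       ((p ij.2 : nat)%:Z - (p ij.1 : nat)%:Z)) < 0)%R].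

Definition Pair n (w : 'S_n) : {set {set 'I_n}} :=
  [set [set i; w i] | i : 'I_n & w i != i].

Definition invw n (w p : 'S_n) : nat := #|Inv p :&: Pair w|.

(* V_n = Q-vector space with basis C_w, w in I_n *)
Notation V n := {ffun invol n -> rat^o}.

(* C_x: basis vector for x (the zero vector if x is not an involution) *)
Definition C n (x : 'S_n) : V n := [ffun u : invol n => ((val u == x)%:R : rat)].

Definition rho n (p : 'S_n) (v : V n) : V n :=
  (\sum_(w : invol n) v w *: (((-1 : rat) ^+ invw (val w) p) *: C (p^-1 * val w * p)%g))%R.

(* sign(s_i; w) with s_i = (i, i+1) (0-indexed: i, j = i+1) *)
Definition sign n (i j : 'I_n) (w : 'S_n) : rat :=
  let s := tperm i j in
  if ((s * w * s)%g == w) && (w j < w i)%N then (-1)%R else 1%R.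

From HB Require Import structures.
From mathcomp Require Import all_boot all_order all_algebra all_fingroup zify.
Set Implicit Arguments. Unset Strict Implicit. Unset Printing Implicit Defensive.
Import Order.TTheory GRing.Theory Num.Theory.
Local Open Scope ring_scope.

(* The sign (-1)^{inv_w(q)} factors over the 2-cycles of w: it is the product,
   over S = {k, w k} in Pair(w), of a local sign that is -1 exactly when q
   reverses the relative order of k and w k.  Whether a composite p;sigma
   reverses {k, l} is the exclusive-or of p reversing {k, l} and sigma
   reversing {p k, p l}; since S |-> p(S) is a bijection from Pair(w) onto
   Pair(p^-1 w p), multiplying the local identities gives the cocycle identity.
   The cocycle identity then turns rho(p;sigma) = rho(sigma) rho(p) into a
   computation on basis vectors C_w, and rho(1) = id because the identity has
   no inversions.  Finally, an adjacent transposition s_i reverses only the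
   pair {i, i+1}, so (-1)^{inv_w(s_i)} = -1 iff w swaps i and i+1, which is
   also exactly when sign(s_i; w) = -1.
   The file follows this order: inversions of 2-element sets, the product
   formula and the cocycle identity, the representation, adjacent
   transpositions, and the main theorem. *)

Definition reversed n (p : 'S_n) (k l : 'I_n) : bool := (k < l)%N != (p k < p l)%N.

Lemma diff_mul_lt0 (a b c d : nat) : a != b -> c != d ->
  ((b%:Z - a%:Z) * (d%:Z - c%:Z) < 0) = ((a < b)%N != (c < d)%N).
Proof.
have pos (x y : nat) : (x < y)%N -> 0 < y%:Z - x%:Z by rewrite subr_gt0 ltz_nat.
have neg (x y : nat) : (y < x)%N -> y%:Z - x%:Z < 0 by rewrite subr_lt0 ltz_nat.
case: (ltngtP a b) => // hab _; case: (ltngtP c d) => // hcd _.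
- by rewrite pmulr_rlt0 ?pos // ltNge ltW ?pos.
- by rewrite pmulr_rlt0 ?pos ?neg.
- by rewrite nmulr_rlt0 ?neg ?pos.
- by rewrite nmulr_rlt0 ?neg // ltNge ltW ?neg.
Qed.

Lemma reversedC n (p : 'S_n) (k l : 'I_n) : k != l -> reversed p l k = reversed p k l.
Proof.
move=> kl; have pkl : p k != p l by rewrite (inj_eq perm_inj).
rewrite /reversed; move: kl pkl; rewrite -!val_eqE /=.
by case: ltngtP => // _ _; case: ltngtP.
Qed.

Lemma reversedM n (p s : 'S_n) (k l : 'I_n) :
  reversed (p * s)%g k l = reversed p k l (+) reversed s (p k) (p l).
Proof.
rewrite /reversed !permM.
by case: (k < l)%N; case: (p k < p l)%N; case: (s (p k) < s (p l))%N.
Qed.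

Lemma set2_eq (T : finType) (k l a b : T) : k != l ->
  [set k; l] = [set a; b] -> (a == k) && (b == l) || (a == l) && (b == k).
Proof.
move=> kl E.
have: k \in [set a; b] by rewrite -E set21.
have: l \in [set a; b] by rewrite -E set22.
rewrite !inE => /orP[]/eqP lE /orP[]/eqP kE; move: kl.
all: by rewrite kE lE ?eqxx ?orbT.
Qed.

Lemma mem_Inv2 n (p : 'S_n) (k l : 'I_n) : k != l ->
  ([set k; l] \in Inv p) = reversed p k l.
Proof.
move=> kl; have pkl : (p k : nat) != p l by rewrite val_eqE (inj_eq perm_inj).
apply/imsetP/idP => [[[a b]] /=|rev].
- rewrite inE /= => cond E.
  case/orP: (set2_eq kl E) => /andP[/eqP ea /eqP eb]; subst a b.
  + by rewrite diff_mul_lt0 in cond.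
  + by rewrite -reversedC // /reversed -diff_mul_lt0 // eq_sym.
- by exists (k, l); rewrite // inE /= diff_mul_lt0.
Qed.

Definition pair_sign n (q : 'S_n) (S : {set 'I_n}) : rat :=
  if S \in Inv q then -1 else 1.

Lemma invw_prod n (w q : 'S_n) :
  (-1) ^+ invw w q = \prod_(S in Pair w) pair_sign q S.
Proof.
rewrite (bigID (mem (Inv q))) /= [X in _ * X]big1 ?mulr1; last first.
  by move=> S /andP[_ /negbTE notinv]; rewrite /pair_sign notinv.
rewrite (eq_bigr (fun _ => -1)) => [|S /andP[_ inv]]; last by rewrite /pair_sign inv.
by rewrite prodr_const; congr (_ ^+ _); apply: eq_card => S; rewrite !inE andbC.
Qed.

Lemma Pair_conj n (w p : 'S_n) :
  Pair (p^-1 * w * p)%g = (fun S : {set 'I_n} => p @: S) @: Pair w.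
Proof.
apply/setP => T; apply/imsetP/imsetP.
- case=> x; rewrite inE !permM => moved ->.
  exists [set (p^-1)%g x; w ((p^-1)%g x)]; last by rewrite imsetU1 imset_set1 permKV.
  apply/imsetP; exists ((p^-1)%g x) => //; rewrite inE.
  by apply: contra moved => /eqP ->; rewrite permKV.
- case=> S /imsetP [k]; rewrite inE => moved -> ->.
  exists (p k); last by rewrite imsetU1 imset_set1 !permM permK.
  by rewrite inE !permM permK (inj_eq perm_inj).
Qed.

Lemma pair_signM n (w p s : 'S_n) (S : {set 'I_n}) : S \in Pair w ->
  pair_sign (p * s)%g S = pair_sign p S * pair_sign s (p @: S).
Proof.
case/imsetP=> k; rewrite inE eq_sym => kwk ->.
have pkwk : p k != p (w k) by rewrite (inj_eq perm_inj).
rewrite imsetU1 imset_set1 /pair_sign !mem_Inv2 // reversedM.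
by case: reversed; case: reversed; rewrite ?mulr1 ?mul1r ?mulrNN.
Qed.

Lemma cocycle n (sigma p w : 'S_n) :
  (-1) ^+ invw w (p * sigma)%g =
  (-1) ^+ invw w p * (-1) ^+ invw (p^-1 * w * p)%g sigma :> rat.
Proof.
rewrite !invw_prod Pair_conj (big_imset _ (h := fun S : {set 'I_n} => p @: S)).
  by rewrite -big_split; apply: eq_bigr => S /pair_signM ->.
by move=> A B _ _; apply: imset_inj; apply: perm_inj.
Qed.

(* Conjugates of involutions are involutions, so rho p permutes the basis up to sign. *)
Lemma conj_invol n (w p : 'S_n) : is_invol w -> is_invol (p^-1 * w * p)%g.
Proof.
move=> /eqP ww; apply/eqP.
by rewrite -!mulgA (mulgA p) mulgV mul1g (mulgA w) ww mul1g mulVg.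
Qed.

Lemma rhoD n (p : 'S_n) (u v : V n) : rho p (u + v) = rho p u + rho p v.
Proof. by rewrite /rho -big_split; apply: eq_bigr => w _; rewrite ffunE scalerDl. Qed.

Lemma rhoZ n (p : 'S_n) (a : rat) (u : V n) : rho p (a *: u) = a *: rho p u.
Proof. by rewrite /rho scaler_sumr; apply: eq_bigr => w _; rewrite ffunE !scalerA. Qed.

Lemma rho_sum n (p : 'S_n) (I : finType) (F : I -> V n) :
  rho p (\sum_(i : I) F i) = \sum_(i : I) rho p (F i).
Proof.
have rho0 : rho p 0 = 0 by have := rhoZ p 0 0; rewrite !scale0r.
exact: (big_morph _ (rhoD p) rho0).
Qed.

Lemma C_coord n (u w : invol n) : C (val u) w = (u == w)%:R.
Proof. by rewrite ffunE eq_sym val_eqE. Qed.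

Lemma rhoC n (p y : 'S_n) (invy : is_invol y) :
  rho p (C y) = (-1) ^+ invw y p *: C (p^-1 * y * p)%g.
Proof.
rewrite /rho (bigD1 (exist _ y invy)) //= big1 ?addr0.
  by rewrite (C_coord (exist _ y invy)) eqxx scale1r.
by move=> w /negbTE neq; rewrite (C_coord (exist _ y invy)) eq_sym neq scale0r.
Qed.

Lemma C_expand n (v : V n) : \sum_(w : invol n) v w *: C (val w) = v.
Proof.
apply/ffunP => u; rewrite sum_ffunE (bigD1 u) //= big1 => [|w /negbTE neq].
  by rewrite addr0 ffunE C_coord eqxx; apply: mulr1.
by rewrite ffunE C_coord neq; apply: mulr0.
Qed.

Lemma Inv1 n : Inv (1 : 'S_n) = set0.
Proof.
apply/setP => S; rewrite inE; apply/imsetP => -[[a b]].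
by rewrite inE /= !perm1 -expr2 ltNge sqr_ge0.
Qed.

Lemma rho1 n (v : V n) : rho 1%g v = v.
Proof.
rewrite -[RHS]C_expand /rho; apply: eq_bigr => w _.
by rewrite /invw Inv1 set0I cards0 expr0 scale1r invg1 mul1g mulg1.
Qed.

Lemma rhoM n (sigma p : 'S_n) (v : V n) : rho (p * sigma)%g v = rho sigma (rho p v).
Proof.
rewrite [rho p v]/rho rho_sum [LHS]/rho; apply: eq_bigr => w _.
rewrite !rhoZ rhoC; last exact/conj_invol/(valP w).
by rewrite !scalerA -mulrA -cocycle invMg !mulgA.
Qed.

Lemma involK n (w : 'S_n) (x : 'I_n) : is_invol w -> w (w x) = x.
Proof. by move=> ww; rewrite -permM (eqP ww) perm1. Qed.

Lemma adj_neq n (i j : 'I_n) : j = i.+1 :> nat -> i != j.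
Proof. by move=> ji; rewrite -val_eqE /= ji neq_ltn ltnSn. Qed.

Lemma reversed_adj_tperm n (i j k l : 'I_n) : j = i.+1 :> nat -> k != l ->
  reversed (tperm i j) k l -> [set k; l] = [set i; j].
Proof.
rewrite /reversed => ji.
case: tpermP => [->|->|/(introN val_eqP) ki /(introN val_eqP) kj];
case: tpermP => [->|->|/(introN val_eqP) li /(introN val_eqP) lj] //;
  try by rewrite setUC.
all: rewrite -val_eqE => kl rev; exfalso; simpl in *; lia.
Qed.

Lemma pair_sign_adj n (i j : 'I_n) (w : 'S_n) (S : {set 'I_n}) :
  j = i.+1 :> nat -> S \in Pair w ->
  pair_sign (tperm i j) S = if S == [set i; j] then -1 else 1.
Proof.
move=> ji /imsetP [k]; rewrite inE eq_sym => kwk ->.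
rewrite /pair_sign mem_Inv2 //.
case: eqVneq => [E|NE]; last first.
  by case: ifP => // rev; case/eqP: NE; apply: reversed_adj_tperm.
have rev_ij : reversed (tperm i j) i j by rewrite /reversed tpermL tpermR ji ltnSn ltnNge leqnSn.
have ij := adj_neq ji.
case/orP: (set2_eq ij (esym E)) => /andP[/eqP -> /eqP ->]; first by rewrite rev_ij.
by rewrite reversedC // rev_ij.
Qed.

Lemma invw_adj n (i j : 'I_n) (w : 'S_n) : j = i.+1 :> nat ->
  (-1) ^+ invw w (tperm i j) = if [set i; j] \in Pair w then -1 else 1 :> rat.
Proof.
move=> ji; rewrite invw_prod; case: ifP => ijw.
- rewrite (bigD1 [set i; j]) //= (pair_sign_adj ji ijw) eqxx big1 ?mulr1 //.
  by move=> S /andP[Sw neq]; rewrite (pair_sign_adj ji Sw) (negbTE neq).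
- apply: big1 => S Sw; rewrite (pair_sign_adj ji Sw).
  by case: eqP => // E; rewrite -E Sw in ijw.
Qed.

Lemma mem_Pair2 n (i j : 'I_n) (w : 'S_n) : is_invol w -> i != j ->
  ([set i; j] \in Pair w) = (w i == j).
Proof.
move=> ww ij; apply/imsetP/eqP => [[k]|wij]; last by exists i; rewrite ?inE wij // eq_sym.
rewrite inE => _ E.
by case/orP: (set2_eq ij E) => /andP[/eqP -> /eqP wk] //; rewrite -wk involK.
Qed.

Lemma tperm_conj_swap n (i j : 'I_n) (w : 'S_n) : is_invol w -> w i = j ->
  (tperm i j * w * tperm i j)%g = w.
Proof.
move=> ww wij; have wji : w j = i by rewrite -wij involK.
apply/permP => x; rewrite !permM.
case: (tpermP i j x) => [->|->|xi xj]; rewrite ?wij ?wji ?tpermL ?tpermR //.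
rewrite tpermD //; apply/eqP => wx; [apply: xj | apply: xi];
  by rewrite -(involK x ww) -wx ?wij ?wji.
Qed.

Lemma tperm_conj_fixed n (i j : 'I_n) (w : 'S_n) : i != j ->
  (tperm i j * w * tperm i j)%g = w -> w i != j -> w i = i /\ w j = j.
Proof.
move=> ij /(congr1 (fun q : 'S_n => q i)); rewrite !permM tpermL.
case: tpermP => [wji|wjj|_ _ /perm_inj wji].
- by move=> ->; rewrite eqxx.
- by move=> <-.
- by rewrite wji eqxx in ij.
Qed.

Lemma sign_adj n (i j : 'I_n) (w : 'S_n) : is_invol w -> j = i.+1 :> nat ->
  sign i j w = if w i == j then -1 else 1.
Proof.
move=> ww ji; rewrite /sign; case: (eqVneq (w i) j) => [wij|wij].
  have wji : w j = i by rewrite -wij involK.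
  by rewrite tperm_conj_swap // eqxx wji wij ji ltnSn.
case: eqP => //= /(tperm_conj_fixed (adj_neq ji))/(_ wij) [-> ->].
by rewrite ji ltnNge leqnSn.
Qed.

Theorem mainTheorem2 (n : nat) :
  (* cocycle identity; sigma pi = (pi * sigma)%g, pi w pi^-1 = (pi^-1 * w * pi)%g *)
  (forall (sigma p w : 'S_n), is_invol w ->
     (-1 : rat) ^+ invw w (p * sigma)%g =
     (-1) ^+ invw w p * (-1) ^+ invw (p^-1 * w * p)%g sigma) /\
  (* rho is a representation of S_n on V_n *)
  (forall (p : 'S_n) (a : rat) (u v : V n),
     rho p (a *: u + v) = a *: rho p u + rho p v) /\
  (forall v : V n, rho 1%g v = v) /\
  (forall (sigma p : 'S_n) (v : V n), rho (p * sigma)%g v = rho sigma (rho p v)) /\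
  (* agreement with rho(s) C_w = sign(s;w) C_{sws} for s = s_i *)
  (forall (i j : 'I_n) (w : invol n), val j = (val i).+1 ->
     rho (tperm i j) (C (val w)) =
     sign i j (val w) *: C (tperm i j * val w * tperm i j)%g).
Proof.
split; first by move=> sigma p w _; exact: cocycle.
split; first by move=> p a u v; rewrite rhoD rhoZ.
split; first exact: rho1.
split; first exact: rhoM.
move=> i j [w ww] /= ji; have ij := adj_neq ji.
by rewrite rhoC // tpermV invw_adj // mem_Pair2 // sign_adj.
Qed.
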